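(* Let $p$ be a prime and $G$ a finite Abelian $p$-group. Given two chains of subgroups of $G$ with the same ends, $L=G_e<G_{e-1}<\dots<G_0=G'$ and $L=H_e<H_{e-1}<\dots<H_0=G'$, each with consecutive indices $p$, we have $$\sum_{j=1}^{e}p^{e-j}B_{G_{j-1},G_j}-\sum_{j=1}^{e}p^{e-j}B_{H_{j-1},H_j}\in K'(G,C_p).$$
   Context: $\Gamma=G\times C_p$, $B(\Gamma)$ its Burnside ring (free on subgroups); $\epsilon$ is the trivial homomorphism, $X\times\epsilon=X\times\{1\}$; for $K\le G$, $\rho:K\to C_p$, $K\times\rho=\{(k,\rho(k))\}$. Type 2 element for $L<G'\le G$ with $G'/L\cong C_p$: $B_{G',L}=L\times\epsilon-\sum_{\tilde\beta}G'\times\tilde\beta-L\times C_p+p\,(G'\times C_p)$, $\tilde\beta$ over homomorphisms $G'\to C_p$ trivial on $L$. $K(\Pi)$ denotes Brauer relations of $\Pi$ (kernel of $B(\Pi)\to R_{\mathbb Q}(\Pi)$, $[X]\mapsto[\mathbb Q[X]]$); $B(G,C_p)$ is the span of graphs; $K(G,C_p)=K(\Gamma)\cap B(G,C_p)$. For $N\le K\le\Gamma$, $\mathrm{Ind}_K^\Gamma\mathrm{Inf}_{K/N}^K$ sends $S/N\mapsto S$. $K'(G,C_p)$ is the submodule of $K(G,C_p)$ generated by elements of $K(G,C_p)$ of the form $\mathrm{Ind}_K^\Gamma\mathrm{Inf}_{K/N}^K(\Theta')$ with $K/N\cong C_p^3$, $\Theta'\in K(K/N)$. *)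

From HB Require Import structures.
From mathcomp Require Import all_boot all_order all_algebra all_fingroup all_solvable all_field all_character.
Set Implicit Arguments. Unset Strict Implicit. Unset Printing Implicit Defensive.
Import GRing.Theory Num.Theory.
Local Open Scope ring_scope.
Local Open Scope group_scope.

(* Elements of the Burnside ring B(Pi) of a finite group Pi are represented
   by their integer coefficient functions on subgroups: a : {ffun {group T} -> int},
   meaning sum_X a X [Pi/X], with support required to lie in the subgroups of Pi.
   (All groups involved here are abelian, so conjugacy classes of subgroups
   are subgroups.) *)
Definition burnside (T : finGroupType) := {ffun {group T} -> int}.

Definition in_burnside (T : finGroupType) (Pi : {set T}) (a : burnside T) : Prop :=
  forall X : {group T}, a X != 0%R -> X \subset Pi.

Definition bs (T : finGroupType) (A : {set T}) : burnside T :=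
  [ffun X : {group T} => ((X : {set T}) == A)%:Z].

(* Brauer relations K(Pi): kernel of B(Pi) -> R_Q(Pi), [Pi/X] |-> Q[Pi/X].
   Q[Pi/X] has character 'Ind[Pi, X] 1; virtual rational representations
   are determined by their characters. *)
Definition brauer (T : finGroupType) (Pi : {group T}) (a : burnside T) : Prop :=
  in_burnside Pi a /\
  (\sum_(X : {group T} | X \subset Pi) (a X)%:~R *: ('Ind[Pi, X] 1 : 'CF(Pi)))%R = 0%R.

(* f : gT -> cT represents a homomorphism K -> C (canonically extended by 1 outside K) *)
Definition hom_to (gT cT : finGroupType) (K : {set gT}) (C : {set cT}) (f : {ffun gT -> cT}) : bool :=
  [&& [forall x in K, forall y in K, f (x * y) == f x * f y],
      [forall x in K, f x \in C] &
      [forall x in ~: K, f x == 1]].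

Definition graph (gT cT : finGroupType) (K : {set gT}) (f : {ffun gT -> cT}) : {set (gT * cT)%type} :=
  [set (x, f x) | x in K].

Definition is_graph (gT cT : finGroupType) (G : {set gT}) (C : {set cT}) (X : {set (gT * cT)%type}) : bool :=
  [exists K : {group gT}, exists f : {ffun gT -> cT},
     [&& (K : {set gT}) \subset G, hom_to K C f & X == graph K f]].

Definition in_BGC (gT cT : finGroupType) (G : {set gT}) (C : {set cT}) (a : burnside (gT * cT)%type) : Prop :=
  forall X : {group (gT * cT)%type}, a X != 0%R -> is_graph G C X.

Definition type2 (gT cT : finGroupType) (C : {group cT}) (G' L : {group gT}) : burnside (gT * cT)%type :=
  (bs (setX L [1 cT])
   - \sum_(f : {ffun gT -> cT} | hom_to G' C f && [forall x in L, f x == 1%g]) bs (graph G' f)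
   - bs (setX L C)
   + (bs (setX G' C)) *+ #|C|)%R.

(* Ind_K^Gamma Inf_{K/N}^K : sends S/N to S *)
Definition indinf (T : finGroupType) (K N : {group T}) (th : burnside (coset_of N)) : burnside T :=
  (\sum_(Y : {group coset_of N} | Y \subset (K / N)%g) (bs (coset N @*^-1 Y)) *~ th Y)%R.

Arguments indinf {T} K N th.

Definition Kprime_gen (gT cT : finGroupType) (G : {group gT}) (C : {group cT}) (x : burnside (gT * cT)%type) : Prop :=
  exists (K N : {group (gT * cT)%type}) (th : burnside (coset_of N)),
    [/\ K \subset setX G C, N <| K,
        (#|C|).-abelem (K / N)%g /\ #|(K / N)%g| = (#|C| ^ 3)%N,
        brauer (quotient_group K N) th &
        x = indinf K N th] /\
    (brauer (setX G C)%G x /\ in_BGC G C x).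

Inductive Kprime (gT cT : finGroupType) (G : {group gT}) (C : {group cT}) : burnside (gT * cT)%type -> Prop :=
  | Kprime0 : Kprime G C 0%R
  | KprimeStep x g (z : int) : Kprime G C x -> Kprime_gen G C g -> Kprime G C (x + g *~ z)%R.

(* If the chains agree in their
   first step, strip it and use induction.  Otherwise G_1 <> H_1 are distinct
   subgroups of index p of the abelian group G_0, so M = G_1 :&: H_1 has index p
   in both, and both chains can be rerouted through M with a common tail below M.
   The rerouted sums differ by p^(e-2) times the "diamond"
   p B_{G_0,G_1} + B_{G_1,M} - p B_{G_0,H_1} - B_{H_1,M}, which is supported on
   the subgroups between M x 1 and G_0 x C_p.  As (G_0 x C_p)/(M x 1) is
   elementary abelian of order p^3, the diamond is Ind Inf of an element of
   B(C_p^3), and that element is a Brauer relation because already every type 2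
   element has zero character: counting the p homomorphisms G'/L -> C_p shows
   that the graph terms cancel the other three terms pointwise. *)

From HB Require Import structures.
From mathcomp Require Import all_boot all_order all_algebra all_fingroup all_solvable all_field all_character.
From mathcomp Require Import ring.

Set Implicit Arguments. Unset Strict Implicit. Unset Printing Implicit Defensive.
Import GRing.Theory Num.Theory.
Local Open Scope group_scope.

Section KprimeSubmodule.
Variables (gT cT : finGroupType) (G : {group gT}) (C : {group cT}).
Local Open Scope ring_scope.

Lemma KprimeD x y : Kprime G C x -> Kprime G C y -> Kprime G C (x + y).
Proof.
move=> Kx; elim=> [|y' g z _ Kxy gen_g]; first by rewrite addr0.
by rewrite addrA; apply: KprimeStep.
Qed.

Lemma Kprime_genMn g n : Kprime_gen G C g -> Kprime G C (g *+ n).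
Proof.
by move=> gen_g; rewrite -[g *+ n]add0r pmulrn; apply: KprimeStep (Kprime0 _ _) gen_g.
Qed.

End KprimeSubmodule.

Section BurnsideSupport.
Variables (T : finGroupType) (P : pred {set T}).
Local Open Scope ring_scope.

Definition supported : {pred burnside T} :=
  [pred a : burnside T | [forall X : {group T}, (a X != 0) ==> P X]].

Lemma supportedP (a : burnside T) :
  reflect (forall X : {group T}, a X != 0 -> P X) (a \in supported).
Proof. by apply: (iffP forallP) => sa X; [apply/implyP: (sa X) | apply/implyP/sa]. Qed.

Fact supported_zmod_closed : zmod_closed supported.
Proof.
split=> [|a b /supportedP sa /supportedP sb]; apply/supportedP=> X.
  by rewrite ffunE eqxx.
rewrite !ffunE; have [/sa //|/negPn/eqP->] := boolP (a X != 0).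
by rewrite add0r oppr_eq0; apply: sb.
Qed.

HB.instance Definition _ := GRing.isZmodClosed.Build (burnside T) supported
  supported_zmod_closed.

Lemma supported_bs (A : {set T}) : P A -> bs A \in supported.
Proof. by move=> PA; apply/supportedP=> X; rewrite ffunE; case: (X =P A :> {set T}) => [->|]. Qed.

End BurnsideSupport.

Lemma in_burnsideE (T : finGroupType) (Pi : {set T}) (a : burnside T) :
  in_burnside Pi a <-> a \in supported (fun X => X \subset Pi).
Proof. by split=> [sa|/supportedP]; first apply/supportedP. Qed.

Section BurnsideCharacter.
Variable T : finGroupType.
Local Open Scope ring_scope.

(* For abelian [Pi] and [a] in B(Pi), [#|Pi| * burnside_char g a] is the value
   at [g] of the character of the virtual permutation representation [a]. *)
Definition burnside_char (g : T) (a : burnside T) : algC :=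
  \sum_(X : {group T}) (a X)%:~R * ((g \in X)%:R / #|X|%:R).

Fact burnside_char_is_zmod_morphism g : zmod_morphism (burnside_char g).
Proof.
move=> a b; rewrite /burnside_char -sumrB; apply: eq_bigr => X _.
by rewrite !ffunE intrD intrN mulrBl.
Qed.

HB.instance Definition _ g := GRing.isZmodMorphism.Build (burnside T) algC
  (burnside_char g) (burnside_char_is_zmod_morphism g).

Lemma burnside_char_bs (A : {group T}) g :
  burnside_char g (bs A) = (g \in A)%:R / #|A|%:R.
Proof.
rewrite /burnside_char (bigD1 A) //= big1 => [|X /negbTE nXA]; rewrite ffunE.
  by rewrite eqxx mul1r addr0.
by rewrite -val_eqE /= in nXA; rewrite nXA mul0r.
Qed.

Lemma burnside_char_supported (P : pred {set T}) a g : a \in supported P ->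
  burnside_char g a = \sum_(X : {group T} | P X) (a X)%:~R * ((g \in X)%:R / #|X|%:R).
Proof.
move=> /supportedP sa; rewrite /burnside_char [LHS](bigID (fun X : {group T} => P X)) /=.
rewrite [X in _ + X]big1 ?addr0 // => X notPX.
by have [/eqP->|/sa] := boolP (a X == 0); rewrite ?mul0r ?(negbTE notPX).
Qed.

Lemma brauer_burnside_char (Pi : {group T}) (a : burnside T) :
  abelian Pi -> in_burnside Pi a -> {in Pi, forall g, burnside_char g a = 0} ->
  brauer Pi a.
Proof.
move=> cPiPi sa a0; split=> //; apply/cfunP=> g.
have [Pi_g|/cfun0->] := boolP (g \in Pi); last by rewrite cfunE.
rewrite cfunE sum_cfunE.
transitivity (#|Pi|%:R * burnside_char g a); last by rewrite a0 ?mulr0.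
rewrite (burnside_char_supported g (iffLR (in_burnsideE Pi a) sa)) mulr_sumr.
apply: eq_bigr => X sXPi; rewrite cfunE cfIndE //.
under eq_bigr => h Pi_h do rewrite cfun1E conjgE (centsP cPiPi g Pi_g h Pi_h) mulKg.
rewrite sumr_const -mulr_natl; field.
by rewrite pnatr_eq0 -lt0n cardG_gt0.
Qed.

End BurnsideCharacter.

Section Graphs.
Variables (gT cT : finGroupType) (C : {group cT}).

Lemma hom_toP (K : {set gT}) (f : {ffun gT -> cT}) :
  reflect [/\ {in K &, {morph f : x y / x * y}}, {in K, forall x, f x \in C}
            & {in ~: K, forall x, f x = 1}]
          (hom_to K C f).
Proof.
apply: (iffP and3P) => [[/forall_inP fM /forall_inP fC /forall_inP f1]|[fM fC f1]].
  split=> [x y Kx Ky|//|x /f1/eqP//].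
  exact/eqP/(forall_inP (fM x Kx)).
split; apply/forall_inP; last by move=> x /f1->.
  by move=> x Kx; apply/forall_inP=> y Ky; rewrite fM.
by [].
Qed.

Lemma hom_to_morphic (K : {set gT}) (f : {ffun gT -> cT}) :
  hom_to K C f -> morphic K f.
Proof. by case/hom_toP=> fM _ _; apply/morphicP. Qed.

Lemma hom_to1 (K : {set gT}) : hom_to K C [ffun=> 1].
Proof. by apply/hom_toP; split=> [x y _ _|x _|x _]; rewrite !ffunE ?mulg1. Qed.

Lemma mem_graph (K : {set gT}) (f : {ffun gT -> cT}) x c :
  ((x, c) \in graph K f) = (x \in K) && (c == f x).
Proof.
by apply/imsetP/andP=> [[y Ky [-> ->]]|[Kx /eqP->]]; [split | exists x].
Qed.

Lemma card_graph (K : {set gT}) (f : {ffun gT -> cT}) : #|graph K f| = #|K|.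
Proof. by rewrite card_imset // => x y /(congr1 fst). Qed.

Lemma graph1 (K : {set gT}) : graph K [ffun=> 1] = setX K [1 cT].
Proof. by apply/setP=> -[x c]; rewrite mem_graph in_setX ffunE inE. Qed.

Lemma graph_sub (K : {set gT}) (f : {ffun gT -> cT}) :
  hom_to K C f -> graph K f \subset setX K C.
Proof.
case/hom_toP=> _ fC _; apply/subsetP=> _ /imsetP[x Kx ->].
by rewrite in_setX Kx fC.
Qed.

Lemma group_set_graph (K : {group gT}) (f : {ffun gT -> cT}) :
  hom_to K C f -> group_set (graph K f).
Proof.
move=> /hom_to_morphic fM; have morphf := morphicP fM.
have f1 : f 1 = 1 by exact: (morph1 (morphm_morphism fM)).
apply/group_setP; split; first by apply/imsetP; exists 1; rewrite ?f1.
move=> _ _ /imsetP[x Kx ->] /imsetP[y Ky ->].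
by rewrite mem_graph groupM //= morphf.
Qed.

Definition graph_group (K : {group gT}) f (homf : hom_to K C f) : {group gT * cT} :=
  Group (group_set_graph homf).

End Graphs.

Arguments hom_toP {gT cT C K f}.

Definition hom_mod (gT cT : finGroupType) (C : {set cT}) (Q L : {set gT})
    (f : {ffun gT -> cT}) : bool :=
  hom_to Q C f && [forall x in L, f x == 1].

Section HomsFromPrimeQuotient.
Variables (gT cT : finGroupType) (C : {group cT}) (Q L : {group gT}) (p : nat).
Hypotheses (p_pr : prime p) (cQQ : abelian Q) (sLQ : L \subset Q)
  (iQL : #|Q : L| = p) (oC : #|C| = p).

Let nLQ : Q \subset 'N(L) := sub_abelian_norm cQQ sLQ.

Lemma quotient_prime_cycle x : x \in Q -> x \notin L -> Q / L = <[coset L x]>.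
Proof.
move=> Qx notLx; apply/eqP; rewrite eq_sym eqEcard cycle_subG mem_quotient //=.
rewrite card_quotient // iQL -orderE.
have: #[coset L x] %| p by rewrite -iQL -card_quotient // order_dvdG ?mem_quotient.
case/primeP: p_pr => _ /[apply] /orP[/eqP x1|/eqP-> //].
by case/negP: notLx; apply: coset_idr (subsetP nLQ x Qx) _; apply/eqP; rewrite -order_eq1 x1.
Qed.

Lemma hom_mod_eval f x y k : hom_mod C Q L f -> x \in Q -> y \in Q ->
  coset L y = coset L x ^+ k -> f y = f x ^+ k.
Proof.
case/andP=> homf /forall_inP f1L Qx Qy yx; have fM := hom_to_morphic homf.
have Lyxk : y * (x ^+ k)^-1 \in L.
  apply: coset_idr; first by rewrite groupM ?groupV ?groupX ?(subsetP nLQ).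
  by rewrite morphM ?morphV ?morphX ?groupV ?groupX ?(subsetP nLQ) //= yx mulgV.
have fXk : f (x ^+ k) = f x ^+ k by exact: (morphX (morphm_morphism fM) k Qx).
rewrite -(mulgKV (x ^+ k) y) (morphicP fM) ?groupX //; last exact: subsetP sLQ _ Lyxk.
by rewrite (eqP (f1L _ Lyxk)) mul1g.
Qed.

Lemma eq_hom_mod f f' x : hom_mod C Q L f -> hom_mod C Q L f' ->
  x \in Q -> x \notin L -> f x = f' x -> f = f'.
Proof.
move=> homf homf' Qx notLx fx; apply/ffunP=> y.
have [Qy|notQy] := boolP (y \in Q); last first.
  have [_ _ f1] := hom_toP (andP homf).1; have [_ _ f'1] := hom_toP (andP homf').1.
  by rewrite f1 ?f'1 ?inE.
have: coset L y \in <[coset L x]> by rewrite -quotient_prime_cycle ?mem_quotient.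
by case/cycleP=> k yx; rewrite (hom_mod_eval homf Qx Qy yx) (hom_mod_eval homf' Qx Qy yx) fx.
Qed.

Lemma exists_hom_mod x c : x \in Q -> x \notin L -> c \in C ->
  exists2 f, hom_mod C Q L f & f x = c.
Proof.
move=> Qx notLx Cc; have QLx := quotient_prime_cycle Qx notLx.
have cQL y : y \in Q -> coset L y \in <[coset L x]> by rewrite -QLx; apply: mem_quotient.
have dvd_c_x : #[c] %| #[coset L x].
  by rewrite [#[coset L x]]orderE -QLx card_quotient // iQL -oC order_dvdG.
exists [ffun y => if y \in Q then eltm dvd_c_x (coset L y) else 1]; last first.
  by rewrite ffunE Qx eltm_id.
apply/andP; split; last first.
  apply/forall_inP=> y Ly; rewrite ffunE (subsetP sLQ) // (coset_id Ly).
  exact/eqP/(eltmE dvd_c_x 0).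
apply/hom_toP; split=> [y z Qy Qz|y Qy|y]; rewrite !ffunE ?inE.
- by rewrite groupM // Qy Qz morphM ?(subsetP nLQ) // eltmM ?cQL.
- by rewrite Qy; have /cycleP[k ->] := cQL y Qy; rewrite eltmE groupX.
- by move/negbTE->.
Qed.

Lemma sum_hom_mod_eval_notin x c : x \in Q -> x \notin L ->
  (\sum_(f | hom_mod C Q L f) (f x == c))%N = (c \in C : nat).
Proof.
move=> Qx notLx; have [Cc|notCc] := boolP (c \in C); last first.
  rewrite big1 // => f /andP[/hom_toP[_ fC _] _].
  by apply/eqP; rewrite eqb0; apply: contra notCc => /eqP <-; apply: fC.
have [f0 homf0 f0x] := exists_hom_mod Qx notLx Cc.
rewrite (bigD1 f0) //= f0x eqxx big1 // => f /andP[homf nf0].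
apply/eqP; rewrite eqb0; apply: contra nf0 => /eqP fx.
by apply/eqP/(eq_hom_mod homf homf0 Qx notLx); rewrite fx.
Qed.

Lemma card_hom_mod : (\sum_(f | hom_mod C Q L f) 1)%N = p.
Proof.
have [x Qx notLx] : exists2 x, x \in Q & x \notin L.
  apply/subsetPn; apply: contraL (prime_gt1 p_pr) => sQL.
  by rewrite -iQL (_ : Q :=: L) ?indexgg //; apply/eqP; rewrite eqEsubset sQL.
rewrite -oC -sum1_card.
transitivity (\sum_(f | hom_mod C Q L f) \sum_(c in C) (f x == c))%N.
  apply: eq_bigr => f /andP[/hom_toP[_ fC _] _].
  rewrite (bigD1 (f x)) ?fC //= eqxx big1 // => c /andP[_ nfx].
  by rewrite eq_sym (negbTE nfx).
rewrite exchange_big; apply: eq_bigr => c Cc.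
by rewrite sum_hom_mod_eval_notin // Cc.
Qed.

Lemma sum_hom_mod_eval_in x c : x \in L ->
  (\sum_(f | hom_mod C Q L f) (f x == c))%N = ((c == 1%g) * p)%N.
Proof.
move=> Lx; rewrite -card_hom_mod big_distrr /= muln1.
by apply: eq_bigr => f /andP[_ /forall_inP/(_ x Lx)/eqP->]; rewrite eq_sym.
Qed.

End HomsFromPrimeQuotient.

Section Type2.
Variables (gT cT : finGroupType) (C : {group cT}) (Q L : {group gT}).
Local Open Scope ring_scope.

Definition type2_nongraph : burnside (gT * cT)%type :=
  bs (setX Q C) *+ #|C| - bs (setX L C).

Lemma type2_graph_supported (G : {group gT}) : Q \subset G -> L \subset Q ->
  type2 C Q L - type2_nongraph \in supported (is_graph G C).
Proof.
move=> sQG sLQ; rewrite /type2 /type2_nongraph opprB addrA addrAC addrK subrK.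
have graphG (K : {group gT}) f : K \subset G -> hom_to K C f -> is_graph G C (graph K f).
  by move=> sKG homf; apply/existsP; exists K; apply/existsP; exists f; rewrite sKG homf /=.
rewrite rpredB ?rpred_sum // => [|f /andP[homf _]]; apply: supported_bs; last exact: graphG.
by rewrite -graph1 graphG ?(subset_trans sLQ) ?hom_to1.
Qed.

Lemma type2_supported (M P : {group gT}) :
  M \subset L -> L \subset Q -> Q \subset P ->
  type2 C Q L \in supported (fun X => (setX M [1 cT] \subset X) && (X \subset setX P C)).
Proof.
move=> sML sLQ sQP; have sMQ := subset_trans sML sLQ; have sLP := subset_trans sLQ sQP.
have sX1 (A B : {set gT}) (D : {group cT}) : A \subset B -> setX A [1 cT] \subset setX B D.
  by move=> sAB; apply: setXS; rewrite ?sub1G.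
rewrite rpredD ?rpredMn ?rpredB ?rpred_sum ?supported_bs ?sX1 ?setXS //.
move=> f /andP[homf /forall_inP f1L]; apply/supported_bs/andP; split.
  apply/subsetP=> -[x c] /setXP[Mx /set1P->].
  by rewrite mem_graph (subsetP sMQ) //= (eqP (f1L x _)) ?(subsetP sML).
by apply: subset_trans (graph_sub homf) _; apply: setXS.
Qed.

Variable p : nat.
Hypotheses (p_pr : prime p) (cQQ : abelian Q) (sLQ : L \subset Q)
  (iQL : #|Q : L|%g = p) (oC : #|C| = p).

Lemma burnside_char_type2 g : burnside_char g (type2 C Q L) = 0.
Proof.
case: g => x c; rewrite /type2 !raddfD !raddfN raddfMn (raddf_sum (burnside_char _)) /=.
rewrite !(burnside_char_bs (setX_group _ _)) /= !in_setX !cardsX cards1 muln1.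
rewrite (eq_bigr (fun f : {ffun gT -> cT} => ((x \in Q) && (c == f x))%:R / #|Q|%:R)); last first.
  by move=> f /andP[homf _]; rewrite (burnside_char_bs (graph_group homf)) mem_graph card_graph.
rewrite -mulr_suml.
have -> : \sum_(f | hom_mod C Q L f) ((x \in Q) && (c == f x))%:R =
          (x \in Q)%:R * (\sum_(f | hom_mod C Q L f) (f x == c))%N%:R :> algC.
  rewrite natr_sum mulr_sumr; apply: eq_bigr => f _.
  by case: (x \in Q); rewrite ?mul1r ?mul0r // eq_sym.
have oQ : #|Q| = (#|L| * p)%N by rewrite -iQL Lagrange.
have p_neq0 : p%:R != 0 :> algC by rewrite pnatr_eq0 -lt0n prime_gt0.
have L_neq0 : #|L|%:R != 0 :> algC by rewrite pnatr_eq0 -lt0n cardG_gt0.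
rewrite oQ oC -mulr_natr !natrM.
have [Lx|notLx] := boolP (x \in L).
  rewrite (subsetP sLQ) // (sum_hom_mod_eval_in p_pr cQQ sLQ iQL oC) // inE natrM.
  by case: (c == 1%g); case: (c \in C); rewrite /=; field; rewrite ?L_neq0 ?p_neq0.
have [Qx|notQx] := boolP (x \in Q); last first.
  by rewrite /=; field; rewrite ?L_neq0 ?p_neq0.
rewrite (sum_hom_mod_eval_notin p_pr cQQ sLQ iQL oC) //.
by case: (c \in C); rewrite /=; field; rewrite ?L_neq0 ?p_neq0.
Qed.

End Type2.

Section BurnsideQuotient.
Variables (T : finGroupType) (K N : {group T}).
Hypothesis nsNK : N <| K.

Let between : pred {set T} := fun X => (N \subset X) && (X \subset K).

Lemma big_quotient_groups (V : zmodType) (F : {group T} -> V) :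
  (\sum_(Y : {group coset_of N} | Y \subset (K / N)%g) F (coset N @*^-1 Y)%G =
   \sum_(X : {group T} | between X) F X)%R.
Proof.
have nNK := normal_norm nsNK.
rewrite (reindex_onto (fun Y : {group coset_of N} => (coset N @*^-1 Y)%G)
                      (fun X : {group T} => (X / N)%G)) /= => [|X /andP[sNX sXK]]; last first.
  by apply: val_inj; apply: quotientGK; apply: normalS sNX sXK nsNK.
apply: eq_bigl => Y; apply/idP/idP => [sYKN|/andP[/andP[_ sYK] /eqP<-]]; last first.
  exact: quotientS.
have sYN : Y \subset coset N @* 'N(N) by apply: subset_trans sYKN (quotientS _ nNK).
rewrite /between -{1}(ker_coset N) ker_sub_pre /=.
rewrite -(quotientGK nsNK) morphpreS //=; apply/eqP/val_inj => /=.
exact: morphpreK.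
Qed.

Definition burnside_quotient (x : burnside T) : burnside (coset_of N) :=
  [ffun Y : {group coset_of N} => if Y \subset K / N then x (coset N @*^-1 Y)%G else 0%R].

Variable x : burnside T.
Hypothesis supp_x : x \in supported between.

Lemma indinf_quotient : indinf K N (burnside_quotient x) = x.
Proof.
apply/ffunP=> X; rewrite /indinf sum_ffunE.
transitivity (\sum_(X' : {group T} | between X') if (X : {set T}) == X' then x X' else 0)%R.
  rewrite -big_quotient_groups; apply: eq_bigr => Y sYKN.
  by rewrite ffunMzE !ffunE sYKN /=; case: eqP => _; [exact: intz | exact: mul0rz].
have [betweenX|notbetweenX] := boolP (between X).
  rewrite (bigD1 X) //= eqxx big1 ?addr0 // => X' /andP[_ neX'].
  by case: eqP => // /val_inj XX'; rewrite XX' eqxx in neX'.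
rewrite big1 => [|X' betweenX']; last first.
  by case: eqP => // eqXX'; rewrite eqXX' betweenX' in notbetweenX.
by apply/esym/eqP; apply: contraR notbetweenX; apply: (supportedP _ _ supp_x).
Qed.

Lemma burnside_quotient_supported :
  burnside_quotient x \in supported (fun Y => Y \subset K / N).
Proof. by apply/supportedP=> Y; rewrite ffunE; case: ifP => //; rewrite eqxx. Qed.

Lemma burnside_char_quotient g : g \in 'N(N) ->
  burnside_char (coset N g) (burnside_quotient x) = (#|N|%:R * burnside_char g x)%R.
Proof.
move=> Ng; rewrite (burnside_char_supported _ burnside_quotient_supported).
rewrite (burnside_char_supported g supp_x) mulr_sumr -big_quotient_groups.
apply: eq_bigr => Y sYKN; rewrite ffunE sYKN /=.
have sYN : Y \subset coset N @* 'N(N).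
  exact: subset_trans sYKN (quotientS _ (normal_norm nsNK)).
rewrite (card_morphpre sYN) ker_coset morphpreE in_setI Ng inE natrM.
by field; rewrite !pnatr_eq0 -!lt0n !cardG_gt0.
Qed.

Lemma brauer_quotient : abelian K -> {in K, forall g, burnside_char g x = 0%R} ->
  brauer (K / N)%G (burnside_quotient x).
Proof.
move=> cKK x0; apply: brauer_burnside_char; first exact: quotient_abelian.
  exact/in_burnsideE/burnside_quotient_supported.
move=> _ /morphimP[g Ng Kg ->]; rewrite burnside_char_quotient // x0 //.
exact: mulr0.
Qed.

End BurnsideQuotient.

Lemma expg_pair (gT cT : finGroupType) (a : gT) (c : cT) n : (a, c) ^+ n = (a ^+ n, c ^+ n).
Proof. by elim: n => [|n IHn]; rewrite ?expg0 // !expgS IHn. Qed.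

Lemma abelian_setX (gT cT : finGroupType) (A : {group gT}) (B : {group cT}) :
  abelian A -> abelian B -> abelian (setX A B).
Proof.
move=> cAA cBB; apply/centsP=> -[a b] /setXP[Aa Bb] [a' b'] /setXP[Aa' Bb'].
by congr pair; [apply: (centsP cAA) | apply: (centsP cBB)].
Qed.

Lemma expg_index_mem (gT : finGroupType) (P A : {group gT}) x :
  abelian P -> A \subset P -> x \in P -> x ^+ #|P : A| \in A.
Proof.
move=> cPP sAP Px; have nAP := sub_abelian_norm cPP sAP.
apply: coset_idr; first by rewrite groupX ?(subsetP nAP).
by rewrite morphX ?(subsetP nAP) // -card_quotient // expg_cardG ?mem_quotient.
Qed.

Lemma index_meet_prime (gT : finGroupType) (P A B : {group gT}) p :
  prime p -> abelian P -> A \subset P -> B \subset P ->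
  #|P : A| = p -> #|P : B| = p -> A != B -> #|A : A :&: B| = p.
Proof.
move=> p_pr cPP sAP sBP iPA iPB neAB.
have cBA : commute B A by apply: centC; apply: sub_abelian_cent2 cPP sBP sAP.
rewrite indexgI -indexMg -comm_joingE //.
have: #|B <*> A : B| %| p by rewrite -iPB indexSg ?joing_subl // join_subG sBP.
case/primeP: (p_pr) => _ /[apply] /orP[|/eqP //].
rewrite indexg_eq1 join_subG subxx /= => sAB; case/negP: neAB.
rewrite -val_eqE /= eqEcard sAB -(leq_pmul2r (prime_gt0 p_pr)).
by rewrite /= -{1}iPB -{1}iPA (Lagrange sAP) (Lagrange sBP).
Qed.

Section Diamond.
Variables (gT cT : finGroupType) (C : {group cT}) (p : nat) (P A B : {group gT}).
Let M := (A :&: B)%G.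

Definition type2_diamond : burnside (gT * cT)%type :=
  (type2 C P A *+ p + type2 C A M - (type2 C P B *+ p + type2 C B M))%R.

Hypotheses (sAP : A \subset P) (sBP : B \subset P).

Lemma type2_diamond_supported :
  type2_diamond \in supported (fun X => (setX M [1 cT] \subset X) && (X \subset setX P C)).
Proof.
by apply: rpredB; apply: rpredD; rewrite ?rpredMn //; apply: type2_supported;
  rewrite ?subsetIl ?subsetIr.
Qed.

Lemma type2_diamond_graph_supported (G : {group gT}) : P \subset G -> #|C| = p ->
  type2_diamond \in supported (is_graph G C).
Proof.
move=> sPG oC; have sAG := subset_trans sAP sPG; have sBG := subset_trans sBP sPG.
(* the non-graph parts of the four type 2 terms cancel out *)
have -> : type2_diamond =
  ((type2 C P A - type2_nongraph C P A) *+ p + (type2 C A M - type2_nongraph C A M)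
   - ((type2 C P B - type2_nongraph C P B) *+ p + (type2 C B M - type2_nongraph C B M)))%R.
  by apply/ffunP=> X; rewrite /type2_diamond /type2_nongraph oC !(ffunE, ffunMnE); ring.
by apply: rpredB; apply: rpredD; rewrite ?rpredMn //; apply: type2_graph_supported;
  rewrite ?subsetIl ?subsetIr.
Qed.

Hypotheses (p_pr : prime p) (cPP : abelian P) (iPA : #|P : A| = p) (iPB : #|P : B| = p)
  (neAB : A != B) (oC : #|C| = p).

Let iAM : #|A : M| = p := index_meet_prime p_pr cPP sAP sBP iPA iPB neAB.
Let cCC : abelian C.
Proof. by apply/cyclic_abelian/prime_cyclic; rewrite oC. Qed.

Let iBM : #|B : M| = p.
Proof. by rewrite /M /= setIC (index_meet_prime p_pr cPP) // eq_sym. Qed.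

Lemma burnside_char_type2_diamond g : burnside_char g type2_diamond = 0%R.
Proof.
have [cAA cBB] := (abelianS sAP cPP, abelianS sBP cPP).
have charE (a b c d : burnside (gT * cT)%type) : burnside_char g (a *+ p + b - (c *+ p + d))%R =
    (burnside_char g a *+ p + burnside_char g b - (burnside_char g c *+ p + burnside_char g d))%R.
  by rewrite raddfB !raddfD !raddfMn.
by rewrite charE !(burnside_char_type2 p_pr) ?subsetIl ?subsetIr // mul0rn !addr0 subrr.
Qed.

Lemma type2_diamond_quotient :
  p.-abelem (setX P C / setX M [1 cT]) /\ #|setX P C / setX M [1 cT]| = (p ^ 3)%N.
Proof.
have cKK := abelian_setX cPP cCC.
have sNK : setX M [1 cT] \subset setX P C.
  by apply: setXS; rewrite ?sub1G // (subset_trans (subsetIl A B)).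
have nNK := sub_abelian_norm cKK sNK.
split.
  apply/(abelemP p_pr); split=> [|_ /morphimP[[a c] Nac /setXP[Pa Cc] ->]].
    exact: quotient_abelian.
  rewrite -morphX //; apply: coset_id; rewrite expg_pair in_setX !inE.
  have cp1 : c ^+ p == 1 by rewrite -oC expg_cardG.
  by rewrite cp1 andbT -{1}iPA -iPB !expg_index_mem.
have oP : #|P| = (#|M| * p ^ 2)%N.
  by rewrite -(Lagrange sAP) -(Lagrange (subsetIl A B)) iPA iAM -mulnA mulnn.
rewrite (card_quotient nNK) -divgS // !cardsX cards1 muln1 oP oC -mulnA -expnSr.
by rewrite mulKn ?cardG_gt0.
Qed.

Lemma Kprime_gen_type2_diamond (G : {group gT}) : abelian G -> P \subset G ->
  Kprime_gen G C type2_diamond.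
Proof.
move=> cGG sPG; pose K := setX_group P C; pose N := setX_group M [1 cT]%G.
have cKK : abelian K := abelian_setX cPP cCC.
have sKGC : K \subset setX G C by apply: setXS.
have nsNK : N <| K.
  by rewrite -sub_abelian_normal //; apply: setXS; rewrite ?sub1G ?(subset_trans (subsetIl A B)).
have [abelemKN oKN] := type2_diamond_quotient.
have suppD := type2_diamond_supported.
exists K, N, (burnside_quotient K N type2_diamond); split; last split.
- rewrite oC; split=> //.
    by apply: (brauer_quotient nsNK) => // g _; apply: burnside_char_type2_diamond.
  by rewrite (indinf_quotient nsNK suppD).
- apply: brauer_burnside_char (abelian_setX cGG cCC) _ (fun g _ => burnside_char_type2_diamond g).
  apply/in_burnsideE/supportedP=> X /(supportedP _ _ suppD)/andP[_ sXK].
  exact: subset_trans sXK sKGC.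
- exact/supportedP/type2_diamond_graph_supported.
Qed.

End Diamond.

Definition scons (T : Type) (x : T) (f : nat -> T) (j : nat) : T :=
  if j is j'.+1 then f j' else x.

Section IndexChains.
Variables (gT : finGroupType) (p : nat).

Definition index_chain (c : nat -> {group gT}) (e : nat) : Prop :=
  forall j, 0 < j <= e -> c j \subset c j.-1 /\ #|c j.-1 : c j| = p.

Lemma index_chain_behead c e : index_chain c e.+1 -> index_chain (fun j => c j.+1) e.
Proof.
by move=> chc [|j] // /andP[_ le_je]; apply: chc.
Qed.

Lemma index_chain_cons (P : {group gT}) (c : nat -> {group gT}) e :
  c 0 \subset P -> #|P : c 0| = p -> index_chain c e -> index_chain (scons P c) e.+1.
Proof. by move=> sc0P iPc0 chc [|[|j]] //= le_je; apply: chc. Qed.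

Lemma index_chain_sub c e i j : index_chain c e -> i <= j <= e -> c j \subset c i.
Proof.
move=> chc; elim: j => [|j IHj] /andP[le_ij le_je].
  by move: le_ij; rewrite leqn0 => /eqP->.
move: le_ij; rewrite leq_eqVlt => /predU1P[-> //|lt_ij].
apply: subset_trans (chc j.+1 le_je).1 (IHj _).
by rewrite -ltnS lt_ij ltnW.
Qed.

Lemma index_chain_index c e k : index_chain c e -> k <= e -> #|c 0 : c k| = (p ^ k)%N.
Proof.
move=> chc; elim: k => [|k IHk] le_ke; first by rewrite indexgg.
have [sc iKc] := chc k.+1 le_ke.
have sc0 : c k \subset c 0 := index_chain_sub (i := 0) chc (ltnW le_ke).
by rewrite -(Lagrange_index sc0 sc) IHk ?(ltnW le_ke) // iKc expnSr.
Qed.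

Lemma exists_index_chain k (M L : {group gT}) : p.-group M -> L \subset M ->
  #|M : L| = (p ^ k)%N -> exists2 c, c 0 = M /\ c k = L & index_chain c k.
Proof.
elim: k M => [|k IHk] M pM sLM iML.
  exists (fun=> M); last by case=> [|j] /andP[].
  by split=> //; apply: val_inj; rewrite /= (index1g sLM iML).
have [eqLM|[H maxH sLH]] := maximal_exists sLM.
  have p1 : 1%N = p.
    move: iML; rewrite eqLM indexgg => /eqP.
    by rewrite -{1}(exp1n k.+1) eqn_exp2r // => /eqP.
  exists (fun=> M); first by split=> //; apply: val_inj.
  by move=> j _; rewrite indexgg.
have sHM := proper_sub (maxgroupp maxH).
have iMH : #|M : H| = p := p_maximal_index pM maxH.
have iHL : #|H : L| = (p ^ k)%N.
  apply/eqP; rewrite -(eqn_pmul2l (indexg_gt0 M H)) Lagrange_index // iML iMH.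
  by rewrite expnS.
have [c [c0 ck] chc] := IHk H (pgroupS sHM pM) sLH iHL.
by exists (scons M c) => //; apply: index_chain_cons; rewrite ?c0.
Qed.

Lemma exists_meet_chain (P A B L : {group gT}) e :
  prime p -> abelian P -> p.-group P -> A \subset P -> B \subset P ->
  #|P : A| = p -> #|P : B| = p -> A != B -> L \subset A :&: B -> #|P : L| = (p ^ e.+2)%N ->
  exists2 c, c 0 = (A :&: B)%G /\ c e = L & index_chain c e.
Proof.
move=> p_pr cPP pP sAP sBP iPA iPB neAB sLM iPL; apply: exists_index_chain.
- exact: pgroupS (subset_trans (subsetIl A B) sAP) pP.
- exact: sLM.
have := Lagrange_index (subset_trans (subsetIl A B) sAP) sLM.
rewrite -(Lagrange_index sAP (subsetIl A B)) iPA (index_meet_prime p_pr cPP) // iPL.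
rewrite !expnS mulnA => /eqP; rewrite eqn_pmul2l ?muln_gt0 ?prime_gt0 //.
by move/eqP.
Qed.

Lemma index_chain_diamond e (c d : nat -> {group gT}) :
  prime p -> abelian (c 0) -> p.-group (c 0) -> c 0 = d 0 -> c e.+2 = d e.+2 ->
  c 1%N != d 1%N -> index_chain c e.+2 -> index_chain d e.+2 ->
  exists2 b, b 0 = (c 1%N :&: d 1%N)%G /\ b e = c e.+2 &
    index_chain (scons (c 0) (scons (c 1%N) b)) e.+2 /\
    index_chain (scons (c 0) (scons (d 1%N) b)) e.+2.
Proof.
move=> p_pr cPP pP c0d0 cede neAB chc chd.
have [sAP iPA] := chc 1%N isT; have [sBP iPB] := chd 1%N isT; rewrite -c0d0 in sBP iPB.
have sLM : c e.+2 \subset c 1%N :&: d 1%N.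
  rewrite subsetI (index_chain_sub (i := 1) (j := e.+2) chc (leqnn _)) cede.
  exact: (index_chain_sub (i := 1) (j := e.+2) chd (leqnn _)).
have [b [b0 be] chb] := exists_meet_chain p_pr cPP pP sAP sBP iPA iPB neAB sLM
  (index_chain_index chc (leqnn _)).
have iAB := index_meet_prime p_pr cPP sAP sBP iPA iPB neAB.
have iBA : #|d 1%N : d 1%N :&: c 1%N| = p.
  by apply: (index_meet_prime p_pr cPP) => //; rewrite eq_sym.
exists b => //; split; apply: index_chain_cons => //; apply: index_chain_cons => //;
  by rewrite b0 /= ?subsetIl ?subsetIr // setIC.
Qed.

End IndexChains.

Section Type2ChainSums.
Variables (gT cT : finGroupType) (C : {group cT}) (p : nat).

Definition type2_chain_sum (c : nat -> {group gT}) (e : nat) : burnside (gT * cT)%type :=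
  (\sum_(1 <= j < e.+1) type2 C (c j.-1) (c j) *+ p ^ (e - j))%R.

Lemma type2_chain_sum0 c : type2_chain_sum c 0 = 0%R.
Proof. by rewrite /type2_chain_sum big_geq. Qed.

Lemma type2_chain_sumS c e : type2_chain_sum c e.+1 =
  (type2 C (c 0) (c 1%N) *+ p ^ e + type2_chain_sum (fun j => c j.+1) e)%R.
Proof.
rewrite /type2_chain_sum big_nat_recl // subSS subn0; congr (_ + _)%R.
by apply: eq_big_nat => j /andP[j_gt0 _]; rewrite prednK // subSS.
Qed.

Lemma type2_chain_sum_diamond (P A B : {group gT}) b e : b 0 = (A :&: B)%G ->
  (type2_chain_sum (scons P (scons A b)) e.+2 - type2_chain_sum (scons P (scons B b)) e.+2 =
   type2_diamond C p P A B *+ p ^ e)%R.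
Proof.
move=> b0; rewrite !type2_chain_sumS /= b0 /type2_diamond.
by apply/ffunP=> X; rewrite !(ffunE, ffunMnE) expnS mulnC !mulrnA; ring.
Qed.

End Type2ChainSums.

Section Type2ChainSumsInKprime.
Variables (gT cT : finGroupType) (G : {group gT}) (C : {group cT}) (p : nat).
Hypotheses (p_pr : prime p) (cGG : abelian G) (pG : p.-group G) (oC : #|C| = p).
Local Notation S := (type2_chain_sum C p).

Lemma Kprime_type2_chain_sumB e (c d : nat -> {group gT}) :
  c 0 = d 0 -> c e = d e -> index_chain p c e -> index_chain p d e -> c 0 \subset G ->
  Kprime G C (S c e - S d e)%R.
Proof.
elim: e c d => [|e IHe] c d c0d0 cede chc chd sc0G.
  by rewrite !type2_chain_sum0 subrr; apply: Kprime0.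
have same_head (c' d' : nat -> {group gT}) : c' 0 = c 0 -> d' 0 = c 0 -> c' 1%N = d' 1%N ->
    c' e.+1 = d' e.+1 -> index_chain p c' e.+1 -> index_chain p d' e.+1 ->
    Kprime G C (S c' e.+1 - S d' e.+1)%R.
  move=> c'0 d'0 c'1d'1 c'ed'e chc' chd'.
  rewrite !type2_chain_sumS c'0 d'0 c'1d'1 (addrC (_ *+ _)%R) addrKA.
  apply: IHe => //; try exact: index_chain_behead.
  by rewrite (subset_trans _ sc0G) // -c'0 (index_chain_sub (i := 0) chc').
have [c1d1|neAB] := eqVneq (c 1%N) (d 1%N); first exact: same_head.
case: e IHe same_head cede chc chd => [|e] IHe same_head cede chc chd.
  by rewrite cede eqxx in neAB.
pose P := c 0; pose A := c 1%N; pose B := d 1%N.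
have cPP : abelian P := abelianS sc0G cGG.
have [b [b0 be] [chc' chd']] :=
  index_chain_diamond p_pr cPP (pgroupS sc0G pG) c0d0 cede neAB chc chd.
have [sAP iPA] := chc 1%N isT; have [sBP iPB] := chd 1%N isT; rewrite -c0d0 in sBP iPB.
have -> : (S c e.+2 - S d e.+2 = (S c e.+2 - S (scons P (scons A b)) e.+2)
           + type2_diamond C p P A B *+ p ^ e + (S (scons P (scons B b)) e.+2 - S d e.+2))%R.
  by rewrite -(@type2_chain_sum_diamond _ _ C p P A B b e b0) !addrA !subrK.
apply: KprimeD; first apply: KprimeD.
- by apply: same_head; rewrite /= ?be.
- by apply/Kprime_genMn/Kprime_gen_type2_diamond.
- by apply: same_head; rewrite /= ?be ?cede.
Qed.

End Type2ChainSumsInKprime.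

Theorem lemma7p6 (p : nat) (gT cT : finGroupType) (G : {group gT}) (C : {group cT})
    (e : nat) (Gs Hs : nat -> {group gT}) :
  prime p -> abelian G -> p.-group G -> #|C| = p ->
  Gs 0 \subset G -> Gs 0 :=: Hs 0 -> Gs e :=: Hs e ->
  (forall j, 0 < j <= e -> Gs j \subset Gs j.-1 /\ #|Gs j.-1 : Gs j| = p) ->
  (forall j, 0 < j <= e -> Hs j \subset Hs j.-1 /\ #|Hs j.-1 : Hs j| = p) ->
  Kprime G C
    (\sum_(1 <= j < e.+1) (type2 C (Gs j.-1) (Gs j)) *+ (p ^ (e - j))
     - \sum_(1 <= j < e.+1) (type2 C (Hs j.-1) (Hs j)) *+ (p ^ (e - j)))%R.
Proof.
move=> p_pr cGG pG oC sG0G eqGH0 eqGHe chainG chainH.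
exact: (Kprime_type2_chain_sumB p_pr cGG pG oC (val_inj eqGH0) (val_inj eqGHe) chainG chainH sG0G).
Qed.
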